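(* Let $(\mathcal{A},\mathcal{E})$ be an exact category and let $X\xrightarrow{f}Y\xrightarrow{g}Z$ be a short exact sequence in $\mathcal{E}$ whose three objects are $\mathcal{E}$-finite. Then $l_\mathcal{E}(Y)\ge l_\mathcal{E}(X)+l_\mathcal{E}(Z)$.
   Context: $(\mathcal{A},\mathcal{E})$ is a Quillen exact category; admissible monics are morphisms $i$ with $(i,d)\in\mathcal{E}$ for some $d$. The $\mathcal{E}$-length $l_\mathcal{E}(X)\in\mathbb{N}\cup\{\infty\}$ is the supremum of all $n$ such that there is a chain $0=X_0\to X_1\to\cdots\to X_n=X$ of admissible monics none of which is an isomorphism; $X$ is $\mathcal{E}$-finite if $l_\mathcal{E}(X)<\infty$. *)

From HB Require Import structures.
From mathcomp Require Import all_boot all_order ssralg.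
From Stdlib Require Import ClassicalEpsilon.

Set Implicit Arguments.
Unset Strict Implicit.
Unset Printing Implicit Defensive.
Import GRing.Theory.
Local Open Scope ring_scope.

Record PreaddCat := {
  Obj :> Type;
  Mor : Obj -> Obj -> zmodType;
  idm : forall X, Mor X X;
  comp : forall X Y Z, Mor Y Z -> Mor X Y -> Mor X Z;
  compA : forall X Y Z W (h : Mor Z W) (g : Mor Y Z) (f : Mor X Y),
      comp h (comp g f) = comp (comp h g) f;
  comp1m : forall X Y (f : Mor X Y), comp (idm Y) f = f;
  compm1 : forall X Y (f : Mor X Y), comp f (idm X) = f;
  compDl : forall X Y Z (g1 g2 : Mor Y Z) (f : Mor X Y),
      comp (g1 + g2) f = comp g1 f + comp g2 f;
  compDr : forall X Y Z (g : Mor Y Z) (f1 f2 : Mor X Y),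
      comp g (f1 + f2) = comp g f1 + comp g f2
}.

Arguments Mor {C} X Y : rename.
Arguments idm {C} X : rename.
Arguments comp {C X Y Z} g f : rename.

Section Defs.
Variable C : PreaddCat.

Definition is_zero_obj (Z : C) : Prop := idm Z = 0.

Definition is_iso (X Y : C) (f : Mor X Y) : Prop :=
  exists g : Mor Y X, comp g f = idm X /\ comp f g = idm Y.

Definition additive : Prop :=
  (exists Z : C, is_zero_obj Z) /\
  forall X Y : C, exists (P : C) (i1 : Mor X P) (p1 : Mor P X)
                         (i2 : Mor Y P) (p2 : Mor P Y),
    [/\ comp p1 i1 = idm X, comp p2 i2 = idm Y, comp p1 i2 = 0,
        comp p2 i1 = 0 & comp i1 p1 + comp i2 p2 = idm P].

Definition is_kernel (X Y Z : C) (i : Mor X Y) (d : Mor Y Z) : Prop :=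
  comp d i = 0 /\
  forall W (h : Mor W Y), comp d h = 0 -> exists! u : Mor W X, comp i u = h.

Definition is_cokernel (X Y Z : C) (i : Mor X Y) (d : Mor Y Z) : Prop :=
  comp d i = 0 /\
  forall W (h : Mor Y W), comp h i = 0 -> exists! u : Mor Z W, comp u d = h.

(** A class of composable pairs (the candidate short exact sequences). *)
Definition pair_class := forall X Y Z : C, Mor X Y -> Mor Y Z -> Prop.

Definition adm_monic (E : pair_class) (X Y : C) (i : Mor X Y) : Prop :=
  exists (Z : C) (d : Mor Y Z), E X Y Z i d.

Definition adm_epic (E : pair_class) (Y Z : C) (d : Mor Y Z) : Prop :=
  exists (X : C) (i : Mor X Y), E X Y Z i d.

(** Exact structure (Quillen; axioms as in Buehler, "Exact categories", Def. 2.1). *)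
Definition exact_structure (E : pair_class) : Prop :=
  [/\
      (forall X Y Z (i : Mor X Y) (d : Mor Y Z),
          E X Y Z i d -> is_kernel i d /\ is_cokernel i d),
      (forall X Y Z X' Y' Z' (i : Mor X Y) (d : Mor Y Z) (i' : Mor X' Y')
              (d' : Mor Y' Z') (a : Mor X X') (b : Mor Y Y') (c : Mor Z Z'),
          E X Y Z i d -> is_iso a -> is_iso b -> is_iso c ->
          comp b i = comp i' a -> comp c d = comp d' b -> E X' Y' Z' i' d'),
      (forall A : C, adm_monic E (idm A)) /\ (forall A : C, adm_epic E (idm A)),
      (forall X Y Z (f : Mor X Y) (g : Mor Y Z),
          adm_monic E f -> adm_monic E g -> adm_monic E (comp g f)) /\
      (forall X Y Z (f : Mor X Y) (g : Mor Y Z),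
          adm_epic E f -> adm_epic E g -> adm_epic E (comp g f)) &
      (forall A B A' (i : Mor A B) (f : Mor A A'), adm_monic E i ->
          exists (B' : C) (i' : Mor A' B') (f' : Mor B B'),
            [/\ comp f' i = comp i' f,
                (forall W (g : Mor B W) (h : Mor A' W), comp g i = comp h f ->
                   exists! u : Mor B' W, comp u f' = g /\ comp u i' = h)
              & adm_monic E i']) /\
      (forall B C' C0 (p : Mor B C0) (f : Mor C' C0), adm_epic E p ->
          exists (B' : C) (p' : Mor B' C') (f' : Mor B' B),
            [/\ comp p f' = comp f p',
                (forall W (g : Mor W B) (h : Mor W C'), comp p g = comp f h ->
                   exists! u : Mor W B', comp f' u = g /\ comp p' u = h)
              & adm_epic E p'])].

Definition has_chain (E : pair_class) (X : C) (n : nat) : Prop :=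
  exists (obj : nat -> C) (m : forall k, Mor (obj k) (obj k.+1)),
    [/\ is_zero_obj (obj 0%N), obj n = X &
        forall k, (k < n)%N -> adm_monic E (m k) /\ ~ is_iso (m k)].

(** E-length in N u {oo}, encoded as option nat (None = oo): the supremum of
    the lengths of chains. *)
Definition lE (E : pair_class) (X : C) : option nat :=
  match excluded_middle_informative
          (exists n, has_chain E X n /\ forall k, has_chain E X k -> (k <= n)%N) with
  | left H => Some (proj1_sig (constructive_indefinite_description _ H))
  | right _ => None
  end.

Definition E_finite (E : pair_class) (X : C) : Prop := lE E X <> None.

End Defs.

Definition addinf (a b : option nat) : option nat :=
  match a, b with Some x, Some y => Some (x + y)%N | _, _ => None end.

Definition leinf (a b : option nat) : Prop :=
  match a, b with
  | _, None => True
  | None, Some _ => False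
  | Some x, Some y => (x <= y)%N
  end.

(* Pull a chain 0 = Z_0 -> ... -> Z_c = Z back along the admissible epic g : Y -> Z.
   The pullback of g along 0 -> Z is the kernel X of g, and the pullback along idm Z
   is (isomorphic to) Y.  Each step P_j -> P_(j+1) between consecutive pullbacks is
   the kernel of the admissible epic P_(j+1) -> Z_(j+1) -> Z_(j+1)/Z_j, hence an
   admissible monic, and it is not an isomorphism because Z_j -> Z_(j+1) is not.
   Appending these c steps to a chain of X of length l(X) gives a chain of Y of
   length l(X) + l(Z). *)
From HB Require Import structures.
From mathcomp Require Import all_boot all_order ssralg.
From Stdlib Require Import ClassicalEpsilon.
Import GRing.Theory.
(* Imported last, so that [comp] and [additive] denote the categorical notions
   rather than those of ssrfun and ssralg. *)

Set Implicit Arguments.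
Unset Strict Implicit.
Unset Printing Implicit Defensive.
Local Open Scope ring_scope.

Section Preadditive.
Variable C : PreaddCat.

Lemma comp0m (X Y Z : C) (f : Mor X Y) : comp (0 : Mor Y Z) f = 0.
Proof.
have H := compDl (0 : Mor Y Z) 0 f; rewrite addr0 in H.
by apply: (addrI (comp (0 : Mor Y Z) f)); rewrite addr0 -H.
Qed.

Lemma compm0 (X Y Z : C) (g : Mor Y Z) : comp g (0 : Mor X Y) = 0.
Proof.
have H := compDr g (0 : Mor X Y) 0; rewrite addr0 in H.
by apply: (addrI (comp g (0 : Mor X Y))); rewrite addr0 -H.
Qed.

Lemma mor_to_zero_obj (T Z : C) (b : Mor T Z) : is_zero_obj Z -> b = 0.
Proof. by move=> HZ; rewrite -(comp1m b) HZ comp0m. Qed.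

Lemma mor_from_zero_obj (T Z : C) (b : Mor Z T) : is_zero_obj Z -> b = 0.
Proof. by move=> HZ; rewrite -(compm1 b) HZ compm0. Qed.

Definition monic (X Y : C) (i : Mor X Y) :=
  forall T (a b : Mor T X), comp i a = comp i b -> a = b.

Definition epic (Y Z : C) (d : Mor Y Z) :=
  forall T (a b : Mor Z T), comp a d = comp b d -> a = b.

Lemma epic_compl (X Y Z : C) (a : Mor Y Z) (b : Mor X Y) :
  epic (comp a b) -> epic a.
Proof. by move=> Hab T s t Hst; apply: Hab; rewrite !compA Hst. Qed.

Lemma kernel_monic (X Y Z : C) (i : Mor X Y) (d : Mor Y Z) :
  is_kernel i d -> monic i.
Proof.
move=> [Hdi Hk] T a b Hab.
have Hdia : comp d (comp i a) = 0 by rewrite compA Hdi comp0m.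
have [u [_ Hu]] := Hk _ _ Hdia.
by rewrite -(Hu a erefl) (Hu b (esym Hab)).
Qed.

Lemma cokernel_epic (X Y Z : C) (i : Mor X Y) (d : Mor Y Z) :
  is_cokernel i d -> epic d.
Proof.
move=> [Hdi Hk] T a b Hab.
have Hadi : comp (comp a d) i = 0 by rewrite -compA Hdi compm0.
have [u [_ Hu]] := Hk _ _ Hadi.
by rewrite -(Hu a erefl) (Hu b (esym Hab)).
Qed.

(* [d] vanishes since [i] is epic, so [idm Y] factors through the kernel [i]. *)
Lemma epic_kernel_iso (X Y Z : C) (i : Mor X Y) (d : Mor Y Z) :
  is_kernel i d -> epic i -> is_iso i.
Proof.
move=> Hk Hi; have Hm := kernel_monic Hk; case: Hk => Hdi Hk.
have Hd0 : comp d (idm Y) = 0.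
  by rewrite (Hi _ d 0) ?comp0m ?compm1 // Hdi comp0m.
have [v [Hiv _]] := Hk _ _ Hd0.
exists v; split => //.
by apply: Hm; rewrite compA Hiv comp1m compm1.
Qed.

Lemma kernel_unique (X X' Y Z : C) (i : Mor X Y) (i' : Mor X' Y) (d : Mor Y Z) :
  is_kernel i d -> is_kernel i' d -> exists a : Mor X' X, is_iso a /\ comp i a = i'.
Proof.
move=> Hk Hk'; have Hm := kernel_monic Hk; have Hm' := kernel_monic Hk'.
case: Hk => Hd Hk; case: Hk' => Hd' Hk'.
have [a [Ha _]] := Hk _ _ Hd'.
have [a' [Ha' _]] := Hk' _ _ Hd.
exists a; split => //; exists a'; split.
  by apply: Hm'; rewrite compA Ha' Ha compm1.
by apply: Hm; rewrite compA Ha Ha' compm1.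
Qed.

Definition is_pullback (B C0 A' P : C) (p : Mor B C0) (x : Mor A' C0)
    (a : Mor P B) (b : Mor P A') :=
  comp p a = comp x b /\
  forall W (s : Mor W B) (t : Mor W A'), comp p s = comp x t ->
    exists! u : Mor W P, comp a u = s /\ comp b u = t.

Lemma kernel_pullback_zero_obj (X Y Z W : C) (f : Mor X Y) (g : Mor Y Z)
    (w : Mor W Z) :
  is_kernel f g -> is_zero_obj W -> is_pullback g w f 0.
Proof.
move=> [Hgf Hk] HW; split; first by rewrite Hgf compm0.
move=> T s t Hst; rewrite (mor_to_zero_obj t HW) compm0 in Hst.
have [u [Hu Huu]] := Hk _ _ Hst.
exists u; split; first by rewrite (mor_to_zero_obj t HW) comp0m.
by move=> u' [Hu' _]; apply: Huu.
Qed.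

Lemma pullback_id_iso (Y Z P : C) (g : Mor Y Z) (e : Mor P Y) (q : Mor P Z) :
  is_pullback g (idm Z) e q -> is_iso e.
Proof.
move=> [Hsq Hu]; rewrite comp1m in Hsq.
have Hg : comp g (idm Y) = comp (idm Z) g by rewrite comp1m compm1.
have [v [[Hev Hqv] _]] := Hu _ _ _ Hg.
have He : comp g e = comp (idm Z) q by rewrite comp1m.
have [z [_ Hz]] := Hu _ _ _ He.
exists v; split => //.
have -> : comp v e = z by apply/esym/Hz; split; rewrite compA ?Hev ?Hqv ?comp1m.
by apply: Hz; split; rewrite compm1.
Qed.

Lemma pullback_kernel (B C0 A' P V : C) (p : Mor B C0) (x : Mor A' C0)
    (a : Mor P B) (b : Mor P A') (d : Mor C0 V) :
  is_pullback p x a b -> is_kernel x d -> is_kernel a (comp d p).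
Proof.
move=> [Hsq Hu] Hk; have Hm := kernel_monic Hk; case: Hk => Hdx Hk.
split; first by rewrite -compA Hsq compA Hdx comp0m.
move=> W t Ht; rewrite -compA in Ht.
have [s [Hs _]] := Hk _ _ Ht.
have [v [[Hav Hbv] Hvu]] := Hu _ t s (esym Hs).
exists v; split => // v' Hv'; apply: Hvu; split => //; apply: Hm.
by rewrite Hs -Hv' !compA Hsq.
Qed.

Lemma pullback_paste (Y Z W W' P P' : C) (g : Mor Y Z) (w' : Mor W' Z)
    (h : Mor W W') (e : Mor P Y) (q : Mor P W) (e' : Mor P' Y) (q' : Mor P' W')
    (u : Mor P P') :
  is_pullback g w' e' q' -> is_pullback g (comp w' h) e q ->
  comp e' u = e -> comp q' u = comp h q -> is_pullback q' h u q.
Proof.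
move=> [Hsq' Hu'] [Hsq Hu] Heu Hqu; split => // T t s Hts.
have Hc : comp g (comp e' t) = comp (comp w' h) s.
  by rewrite compA Hsq' -compA Hts compA.
have [v [[Hev Hqv] Hvu]] := Hu _ _ _ Hc.
have Hc' : comp g (comp e' t) = comp w' (comp q' t) by rewrite !compA Hsq'.
have [z [_ Hz]] := Hu' _ _ _ Hc'.
exists v; split.
  split => //; rewrite -(Hz t (conj erefl erefl)); apply/esym/Hz; split.
    by rewrite compA Heu.
  by rewrite compA Hqu -compA Hqv Hts.
move=> v' [Huv' Hqv']; apply: Hvu; split => //.
by rewrite -Heu -compA Huv'.
Qed.

End Preadditive.

Section ExactCategory.
Variables (C : PreaddCat) (E : pair_class C).

Definition proper_adm_monic (A B : C) (h : Mor A B) := adm_monic E h /\ ~ is_iso h.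

(* [has_chain] built from its last step. *)
Inductive chain : C -> nat -> Prop :=
| chain0 A : is_zero_obj A -> chain A 0
| chainS A B n (h : Mor A B) : chain A n -> proper_adm_monic h -> chain B n.+1.

Inductive mono_path : C -> C -> nat -> Prop :=
| mono_path0 A : mono_path A A 0
| mono_pathS A A' B n (h : Mor A A') :
    proper_adm_monic h -> mono_path A' B n -> mono_path A B n.+1.

Lemma mono_path_rcons A B n B' (h : Mor B B') :
  mono_path A B n -> proper_adm_monic h -> mono_path A B' n.+1.
Proof.
move=> Hp; elim: Hp B' h => [A0|A0 A1 B0 n0 h0 Hh0 _ IH] B' h Hh.
  exact: mono_pathS Hh (mono_path0 _).
exact: mono_pathS Hh0 (IH _ _ Hh).
Qed.

Lemma chain_mono_path B n :
  chain B n -> exists A, is_zero_obj A /\ mono_path A B n.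
Proof.
elim=> [A HA|A B0 n0 h _ [A0 [HA0 Hp]] Hh]; first by exists A; split => //; apply: mono_path0.
by exists A0; split => //; apply: mono_path_rcons Hp Hh.
Qed.

Definition ocons (A : C) (obj : nat -> C) (k : nat) : C :=
  if k is k'.+1 then obj k' else A.

Lemma mono_path_seq A B n : mono_path A B n ->
  exists (obj : nat -> C) (m : forall k, Mor (ocons A obj k) (ocons A obj k.+1)),
    ocons A obj n = B /\ forall k, (k < n)%N -> proper_adm_monic (m k).
Proof.
elim=> [A0|A0 A1 B0 n0 h Hh _ [obj [m [Hn Hm]]]].
  exists (fun _ => A0).
  by exists (fun k => match k return Mor (ocons A0 (fun=> A0) k) (ocons A0 (fun=> A0) k.+1)
                    with 0 | _.+1 => idm A0 end).
exists (ocons A1 obj).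
exists (fun k => match k return Mor (ocons A0 (ocons A1 obj) k)
                                  (ocons A0 (ocons A1 obj) k.+1) with
                 | 0 => h | k'.+1 => m k' end).
by split => // -[|k] Hk //=; apply: Hm.
Qed.

Lemma has_chainP B n : has_chain E B n <-> chain B n.
Proof.
split.
  move=> [obj [m [Hz <- Hm]]].
  suff H k : (k <= n)%N -> chain (obj k) k by apply: H.
  elim: k => [_|k IH Hk]; first exact: chain0.
  exact: chainS (IH (ltnW Hk)) (Hm k Hk).
move=> /chain_mono_path [A [HA /mono_path_seq [obj [m [Hn Hm]]]]].
by exists (ocons A obj), m; split.
Qed.

Lemma lE_Some B n :
  lE E B = Some n -> has_chain E B n /\ forall k, has_chain E B k -> (k <= n)%N.
Proof.
rewrite /lE; case: excluded_middle_informative => [H|//] [<-].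
exact: proj2_sig (constructive_indefinite_description _ H).
Qed.

Hypothesis HE : exact_structure E.

Lemma exact_pair_kernel_cokernel (X Y Z : C) (i : Mor X Y) (d : Mor Y Z) :
  @E X Y Z i d -> is_kernel i d /\ is_cokernel i d.
Proof. by case: HE => Hkc *; apply: Hkc. Qed.

Lemma adm_monic_kernel (X Y : C) (i : Mor X Y) :
  adm_monic E i -> exists (Z : C) (d : Mor Y Z), is_kernel i d /\ adm_epic E d.
Proof.
move=> [Z [d Hid]]; exists Z, d; split; last by exists X, i.
by case: (exact_pair_kernel_cokernel Hid).
Qed.

Lemma adm_epic_epic (Y Z : C) (d : Mor Y Z) : adm_epic E d -> epic d.
Proof.
move=> [X [i /exact_pair_kernel_cokernel [_ Hc]]]; exact: cokernel_epic Hc.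
Qed.

Lemma adm_monic_id (A : C) : adm_monic E (idm A).
Proof. by case: HE => _ _ [E0 _] _ _; apply: E0. Qed.

Lemma adm_monic_comp (X Y Z : C) (f : Mor X Y) (g : Mor Y Z) :
  adm_monic E f -> adm_monic E g -> adm_monic E (comp g f).
Proof. by case: HE => _ _ _ [E1 _] _; apply: E1. Qed.

Lemma adm_epic_comp (X Y Z : C) (f : Mor X Y) (g : Mor Y Z) :
  adm_epic E f -> adm_epic E g -> adm_epic E (comp g f).
Proof. by case: HE => _ _ _ [_ E1op] _; apply: E1op. Qed.

Lemma adm_epic_pullback (B C' C0 : C) (p : Mor B C0) (x : Mor C' C0) :
  adm_epic E p ->
  exists (P : C) (p' : Mor P C') (x' : Mor P B), is_pullback p x x' p' /\ adm_epic E p'.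
Proof.
case: HE => _ _ _ _ [_ E2op] /(E2op _ _ _ _ x) [P [p' [x' [Hsq Hu Hp']]]].
by exists P, p', x'.
Qed.

Lemma kernel_adm_monic (X Y Z : C) (i : Mor X Y) (d : Mor Y Z) :
  is_kernel i d -> adm_epic E d -> adm_monic E i.
Proof.
case: HE => _ Hiso _ _ _ Hk [K [k HEk]].
have [Hkk _] := exact_pair_kernel_cokernel HEk.
have [a [[a' [Ha'a Haa']] Hka]] := kernel_unique Hkk Hk.
exists Z, d; apply: (Hiso _ _ _ _ _ _ k d i d a' (idm Y) (idm Z) HEk).
- by exists a.
- by exists (idm Y); rewrite comp1m.
- by exists (idm Z); rewrite comp1m.
- by rewrite comp1m -Hka -compA Haa' compm1.
- by rewrite comp1m compm1.
Qed.

Lemma iso_adm_monic (A B : C) (a : Mor A B) : is_iso a -> adm_monic E a.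
Proof.
case: HE => _ Hiso [E0 _] _ _ [a' [Ha'a Haa']].
have [Z [d Hd]] := E0 A.
exists Z, (comp d a').
apply: (Hiso _ _ _ _ _ _ (idm A) d a (comp d a') (idm A) a (idm Z) Hd) => //.
- by exists (idm A); rewrite comp1m.
- by exists a'.
- by exists (idm Z); rewrite comp1m.
- by rewrite comp1m -compA Ha'a compm1.
Qed.

Lemma chain_iso P n : chain P n -> forall Y (a : Mor P Y), is_iso a -> chain Y n.
Proof.
case=> [A HA|A B k h Hc [Hh Hhi]] Y a [a' [Ha'a Haa']].
  by apply: chain0; rewrite /is_zero_obj -Haa' (mor_from_zero_obj a HA) comp0m.
apply: (chainS (h := comp a h)) Hc _; split.
  by apply: adm_monic_comp => //; apply: iso_adm_monic; exists a'.
move=> [j [Hjah Hhj]]; apply: Hhi; exists (comp j a); split; first by rewrite -compA.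
by rewrite -(comp1m (comp h (comp j a))) -Ha'a -!compA (compA a h) (compA _ j) Hhj comp1m.
Qed.

Section PullbackChain.
Variables (X Y Z : C) (f : Mor X Y) (g : Mor Y Z).
Hypothesis Hfg : @E X Y Z f g.

Lemma chain_pullback n k W (w : Mor W Z) :
  chain X n -> chain W k -> adm_monic E w ->
  exists P (e : Mor P Y) (q : Mor P W), is_pullback g w e q /\ chain P (n + k).
Proof.
move=> HXn HWk; elim: HWk w => [A HA|A A' k0 h _ IH [Hh Hhi]] w Hw.
  have [Hfg_ker _] := exact_pair_kernel_cokernel Hfg.
  by exists X, f, 0; split; [apply: kernel_pullback_zero_obj | rewrite addn0].
have [P [e [q [Hpb_wh Hch]]]] := IH _ (adm_monic_comp Hh Hw).
have Hg : adm_epic E g by exists X, f.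
have [P' [q' [e' [Hpb_w Hq']]]] := adm_epic_pullback w Hg.
have Hgehq : comp g e = comp w (comp h q) by rewrite Hpb_wh.1 compA.
have [u [[Heu Hqu] _]] := Hpb_w.2 _ _ _ Hgehq.
have Hpb := pullback_paste Hpb_w Hpb_wh Heu Hqu.
have [V [r [Hhr Hr]]] := adm_monic_kernel Hh.
have Hur := pullback_kernel Hpb Hhr.
exists P', e', q'; split => //; rewrite addnS.
apply: chainS Hch _; split; first exact: kernel_adm_monic Hur (adm_epic_comp Hq' Hr).
(* An invertible [u] would make [h] a factor of the epic [q']. *)
move=> [u' [_ Huu']]; apply: Hhi; apply: (epic_kernel_iso Hhr).
apply: (@epic_compl _ _ _ _ h (comp q u')).
by rewrite compA -Hqu -compA Huu' compm1; apply: adm_epic_epic.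
Qed.

End PullbackChain.

End ExactCategory.

Theorem theorem6p4 (C : PreaddCat) (HC : additive C) (E : pair_class C)
  (HE : exact_structure E) (X Y Z : C) (f : Mor X Y) (g : Mor Y Z)
  (Hfg : E X Y Z f g)
  (HX : E_finite E X) (HY : E_finite E Y) (HZ : E_finite E Z) :
  leinf (addinf (lE E X) (lE E Z)) (lE E Y).
Proof.
case HXl: (lE E X) HX => [a|] // _.
case HZl: (lE E Z) HZ => [c|] // _.
case HYl: (lE E Y) HY => [b|] // _ /=.
have [/has_chainP HXa _] := lE_Some HXl.
have [/has_chainP HZc _] := lE_Some HZl.
have [_ HYmax] := lE_Some HYl.
have [P [e [q [Hpb HP]]]] := chain_pullback HE Hfg HXa HZc (adm_monic_id HE Z).
by apply/HYmax/has_chainP/(chain_iso HE HP (pullback_id_iso Hpb)).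
Qed.
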